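(* Let $1\le i,j,k,l\le n$ with $i<j$, $k<l$, $i\le k$. Then in ${\boldsymbol U}_{v}(\mathfrak q_n)$: \[ \mathsf E_{j,i}\mathsf E_{k,l}=\begin{cases}\mathsf E_{k,l}\mathsf E_{j,i} & (i<j\le k<l\text{ or } i<k<l<j),\\ \mathsf E_{k,l}\mathsf E_{j,i}-\mathsf E_{j,l}\mathsf K_j\mathsf K_i^{-1} & (i=k<j<l),\\ \mathsf E_{k,l}\mathsf E_{j,i}+\mathsf E_{k,i}\mathsf K_j\mathsf K_k^{-1} & (i<k<j=l),\\ \mathsf E_{k,l}\mathsf E_{j,i}-(v-v^{-1})\mathsf E_{k,i}\mathsf E_{j,l}\mathsf K_j\mathsf K_k^{-1} & (i<k<j<l),\\ \mathsf E_{k,l}\mathsf E_{j,i}+\dfrac{\mathsf K_j\mathsf K_i^{-1}-\mathsf K_i\mathsf K_j^{-1}}{v-v^{-1}} & (i=k\text{ and } j=l).\end{cases} \]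
   Context: Let $v$ be an indeterminate. The quantum queer superalgebra ${\boldsymbol U}_{v}(\mathfrak q_n)$ is the associative superalgebra over $\mathbb Q(v)$ generated by even generators $\mathsf K_i,\mathsf K_i^{-1}$ ($1\le i\le n$), $\mathsf E_j,\mathsf F_j$ ($1\le j\le n-1$) and odd generators $\mathsf K_{\bar i}$ ($1\le i\le n$), $\mathsf E_{\bar j},\mathsf F_{\bar j}$ ($1\le j\le n-1$), subject to the following relations (indices are taken only where they make sense), where $(\epsilon_i,\alpha_j)=\delta_{i,j}-\delta_{i,j+1}$: (QQ1) $\mathsf K_i\mathsf K_i^{-1}=\mathsf K_i^{-1}\mathsf K_i=1$, $\mathsf K_i\mathsf K_j=\mathsf K_j\mathsf K_i$, $\mathsf K_i\mathsf K_{\bar j}=\mathsf K_{\bar j}\mathsf K_i$, $\mathsf K_{\bar i}\mathsf K_{\bar j}+\mathsf K_{\bar j}\mathsf K_{\bar i}=2\delta_{i,j}\frac{\mathsf K_i^2-\mathsf K_i^{-2}}{v^2-v^{-2}}$. (QQ2) $\mathsf K_i\mathsf E_j=v^{(\epsilon_i,\alpha_j)}\mathsf E_j\mathsf K_i$, $\mathsf K_i\mathsf E_{\bar j}=v^{(\epsilon_i,\alpha_j)}\mathsf E_{\bar j}\mathsf K_i$, $\mathsf K_i\mathsf F_j=v^{-(\epsilon_i,\alpha_j)}\mathsf F_j\mathsf K_i$, $\mathsf K_i\mathsf F_{\bar j}=v^{-(\epsilon_i,\alpha_j)}\mathsf F_{\bar j}\mathsf K_i$. (QQ3) $\mathsf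 K_{\bar i}\mathsf E_i-v\mathsf E_i\mathsf K_{\bar i}=\mathsf E_{\bar i}\mathsf K_i^{-1}$, $v\mathsf K_{\bar i}\mathsf E_{i-1}-\mathsf E_{i-1}\mathsf K_{\bar i}=-\mathsf K_i^{-1}\mathsf E_{\overline{i-1}}$, $\mathsf K_{\bar i}\mathsf F_i-v\mathsf F_i\mathsf K_{\bar i}=-\mathsf F_{\bar i}\mathsf K_i$, $v\mathsf K_{\bar i}\mathsf F_{i-1}-\mathsf F_{i-1}\mathsf K_{\bar i}=\mathsf K_i\mathsf F_{\overline{i-1}}$, $\mathsf K_{\bar i}\mathsf E_{\bar i}+v\mathsf E_{\bar i}\mathsf K_{\bar i}=\mathsf E_i\mathsf K_i^{-1}$, $v\mathsf K_{\bar i}\mathsf E_{\overline{i-1}}+\mathsf E_{\overline{i-1}}\mathsf K_{\bar i}=\mathsf K_i^{-1}\mathsf E_{i-1}$, $\mathsf K_{\bar i}\mathsf F_{\bar i}+v\mathsf F_{\bar i}\mathsf K_{\bar i}=\mathsf F_i\mathsf K_i$, $v\mathsf K_{\bar i}\mathsf F_{\overline{i-1}}+\mathsf F_{\overline{i-1}}\mathsf K_{\bar i}=\mathsf K_i\mathsf F_{i-1}$, and for $j\ne i,i-1$: $\mathsf K_{\bar i}\mathsf E_j=\mathsf E_j\mathsf K_{\bar i}$, $\mathsf K_{\bar i}\mathsf F_j=\mathsf F_j\mathsf K_{\bar i}$, $\mathsf K_{\bar i}\mathsf E_{\bar j}=-\mathsf E_{\bar j}\mathsf K_{\bar i}$,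 $\mathsf K_{\bar i}\mathsf F_{\bar j}=-\mathsf F_{\bar j}\mathsf K_{\bar i}$. (QQ4) $\mathsf E_i\mathsf F_j-\mathsf F_j\mathsf E_i=\delta_{i,j}\frac{\mathsf K_i\mathsf K_{i+1}^{-1}-\mathsf K_i^{-1}\mathsf K_{i+1}}{v-v^{-1}}$, $\mathsf E_{\bar i}\mathsf F_{\bar j}+\mathsf F_{\bar j}\mathsf E_{\bar i}=\delta_{i,j}\big(\frac{\mathsf K_i\mathsf K_{i+1}-\mathsf K_i^{-1}\mathsf K_{i+1}^{-1}}{v-v^{-1}}+(v-v^{-1})\mathsf K_{\bar i}\mathsf K_{\overline{i+1}}\big)$, $\mathsf E_i\mathsf F_{\bar j}-\mathsf F_{\bar j}\mathsf E_i=\delta_{i,j}(\mathsf K_{i+1}^{-1}\mathsf K_{\bar i}-\mathsf K_{\overline{i+1}}\mathsf K_i^{-1})$, $\mathsf E_{\bar i}\mathsf F_j-\mathsf F_j\mathsf E_{\bar i}=\delta_{i,j}(\mathsf K_{i+1}\mathsf K_{\bar i}-\mathsf K_{\overline{i+1}}\mathsf K_i)$. (QQ5) $\mathsf E_{\bar i}^2=-\frac{v-v^{-1}}{v+v^{-1}}\mathsf E_i^2$, $\mathsf F_{\bar i}^2=\frac{v-v^{-1}}{v+v^{-1}}\mathsf F_i^2$; for $|i-j|\ne1$: $\mathsf E_i\mathsf E_{\bar j}=\mathsf E_{\bar j}\mathsf E_i$, $\mathsf F_i\mathsf F_{\bar j}=\mathsf F_{\bar j}\mathsf F_i$; for $|i-j|>1$: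 $\mathsf E_i\mathsf E_j=\mathsf E_j\mathsf E_i$, $\mathsf F_i\mathsf F_j=\mathsf F_j\mathsf F_i$, $\mathsf E_{\bar i}\mathsf E_{\bar j}=-\mathsf E_{\bar j}\mathsf E_{\bar i}$, $\mathsf F_{\bar i}\mathsf F_{\bar j}=-\mathsf F_{\bar j}\mathsf F_{\bar i}$; $\mathsf E_i\mathsf E_{i+1}-v\mathsf E_{i+1}\mathsf E_i=\mathsf E_{\bar i}\mathsf E_{\overline{i+1}}+v\mathsf E_{\overline{i+1}}\mathsf E_{\bar i}$, $\mathsf E_i\mathsf E_{\overline{i+1}}-v\mathsf E_{\overline{i+1}}\mathsf E_i=\mathsf E_{\bar i}\mathsf E_{i+1}-v\mathsf E_{i+1}\mathsf E_{\bar i}$, $\mathsf F_i\mathsf F_{i+1}-v\mathsf F_{i+1}\mathsf F_i=-(\mathsf F_{\bar i}\mathsf F_{\overline{i+1}}+v\mathsf F_{\overline{i+1}}\mathsf F_{\bar i})$, $\mathsf F_i\mathsf F_{\overline{i+1}}-v\mathsf F_{\overline{i+1}}\mathsf F_i=\mathsf F_{\bar i}\mathsf F_{i+1}-v\mathsf F_{i+1}\mathsf F_{\bar i}$. (QQ6) for $|i-j|=1$: $\mathsf E_i^2X-(v+v^{-1})\mathsf E_iX\mathsf E_i+X\mathsf E_i^2=0$ for $X\in\{\mathsf E_j,\mathsf E_{\bar j}\}$ and $\mathsf F_i^2Y-(v+v^{-1})\mathsf F_iY\mathsf F_i+Y\mathsf F_i^2=0$ for $Y\in\{\mathsf F_j,\mathsf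 F_{\bar j}\}$. Quantum root vectors: for $1\le i\le n-1$ put $\mathsf E_{i,i+1}=\mathsf E_i$, $\overline{\mathsf E}_{i,i+1}=\mathsf E_{\bar i}$, $\mathsf E_{i+1,i}=\mathsf F_i$, $\overline{\mathsf E}_{i+1,i}=\mathsf F_{\bar i}$, and recursively for $i+1<j\le n$: $\mathsf E_{i,j}=-\mathsf E_{i,j-1}\mathsf E_{j-1}+v^{-1}\mathsf E_{j-1}\mathsf E_{i,j-1}$, $\overline{\mathsf E}_{i,j}=-\mathsf E_{i,j-1}\mathsf E_{\overline{j-1}}+v^{-1}\mathsf E_{\overline{j-1}}\mathsf E_{i,j-1}$, $\mathsf E_{j,i}=-\mathsf F_{j-1}\mathsf E_{j-1,i}+v\mathsf E_{j-1,i}\mathsf F_{j-1}$, $\overline{\mathsf E}_{j,i}=-\mathsf F_{\overline{j-1}}\mathsf E_{j-1,i}+v\mathsf E_{j-1,i}\mathsf F_{\overline{j-1}}$. *)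

From HB Require Import structures.
From mathcomp Require Import all_boot all_order all_algebra.
Set Implicit Arguments. Unset Strict Implicit. Unset Printing Implicit Defensive.
Import Order.TTheory GRing.Theory Num.Theory.
Local Open Scope ring_scope.

Definition QV : fieldType := {fraction {poly rat}}.
Definition vq : QV := tofrac ('X : {poly rat}).

(* v^{(eps_i, alpha_j)} with (eps_i,alpha_j) = delta_{i,j} - delta_{i,j+1} *)
Definition vpow (i j : nat) : QV :=
  if i == j then vq else if i == j.+1 then vq^-1 else 1.
Definition vpowN (i j : nat) : QV :=
  if i == j then vq^-1 else if i == j.+1 then vq else 1.

Section Uq.
Variable A : algType QV.
Variable n : nat.
(* Generators, indexed 1-based by nat:
   K i = K_i, Ki i = K_i^{-1}, Kb i = K_{bar i}, E j = E_j, Eb j = E_{bar j},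
   F j = F_j, Fb j = F_{bar j}. *)
Variables K Ki Kb E Eb F Fb : nat -> A.

Local Notation inN i := (1 <= i <= n)%N.
Local Notation inN1 j := (1 <= j <= n.-1)%N.
Local Notation v := vq.

Definition QQ1 : Prop :=
  forall i j, inN i -> inN j ->
  [/\ K i * Ki i = 1, Ki i * K i = 1, K i * K j = K j * K i,
      K i * Kb j = Kb j * K i &
      Kb i * Kb j + Kb j * Kb i =
        (if i == j then 2%:R * (v ^+ 2 - v ^- 2)^-1 else 0) *: (K i ^+ 2 - Ki i ^+ 2)].

Definition QQ2 : Prop :=
  forall i j, inN i -> inN1 j ->
  [/\ K i * E j = vpow i j *: (E j * K i),
      K i * Eb j = vpow i j *: (Eb j * K i),
      K i * F j = vpowN i j *: (F j * K i) &
      K i * Fb j = vpowN i j *: (Fb j * K i)].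

Definition QQ3 : Prop :=
  (forall i, inN i -> inN1 i ->
    [/\ Kb i * E i - v *: (E i * Kb i) = Eb i * Ki i,
        Kb i * F i - v *: (F i * Kb i) = - (Fb i * K i),
        Kb i * Eb i + v *: (Eb i * Kb i) = E i * Ki i &
        Kb i * Fb i + v *: (Fb i * Kb i) = F i * K i]) /\
  (forall i, inN i -> inN1 i.-1 ->
    [/\ v *: (Kb i * E i.-1) - E i.-1 * Kb i = - (Ki i * Eb i.-1),
        v *: (Kb i * F i.-1) - F i.-1 * Kb i = K i * Fb i.-1,
        v *: (Kb i * Eb i.-1) + Eb i.-1 * Kb i = Ki i * E i.-1 &
        v *: (Kb i * Fb i.-1) + Fb i.-1 * Kb i = K i * F i.-1]) /\
  (forall i j, inN i -> inN1 j -> j != i -> j != i.-1 ->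
    [/\ Kb i * E j = E j * Kb i,
        Kb i * F j = F j * Kb i,
        Kb i * Eb j = - (Eb j * Kb i) &
        Kb i * Fb j = - (Fb j * Kb i)]).

Definition QQ4 : Prop :=
  forall i j, inN1 i -> inN1 j ->
  [/\ E i * F j - F j * E i =
        (if i == j then (v - v^-1)^-1 *: (K i * Ki i.+1 - Ki i * K i.+1) else 0),
      Eb i * Fb j + Fb j * Eb i =
        (if i == j then (v - v^-1)^-1 *: (K i * K i.+1 - Ki i * Ki i.+1)
                        + (v - v^-1) *: (Kb i * Kb i.+1) else 0),
      E i * Fb j - Fb j * E i =
        (if i == j then Ki i.+1 * Kb i - Kb i.+1 * Ki i else 0) &
      Eb i * F j - F j * Eb i =
        (if i == j then K i.+1 * Kb i - Kb i.+1 * K i else 0)].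

Definition QQ5 : Prop :=
  (forall i, inN1 i ->
    Eb i ^+ 2 = - (((v - v^-1) / (v + v^-1)) *: E i ^+ 2) /\
    Fb i ^+ 2 = ((v - v^-1) / (v + v^-1)) *: F i ^+ 2) /\
  (forall i j, inN1 i -> inN1 j -> i != j.+1 -> j != i.+1 ->
    E i * Eb j = Eb j * E i /\ F i * Fb j = Fb j * F i) /\
  (forall i j, inN1 i -> inN1 j -> (i.+1 < j)%N || (j.+1 < i)%N ->
    [/\ E i * E j = E j * E i, F i * F j = F j * F i,
        Eb i * Eb j = - (Eb j * Eb i) & Fb i * Fb j = - (Fb j * Fb i)]) /\
  (forall i, inN1 i -> inN1 i.+1 ->
    [/\ E i * E i.+1 - v *: (E i.+1 * E i) = Eb i * Eb i.+1 + v *: (Eb i.+1 * Eb i),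
        E i * Eb i.+1 - v *: (Eb i.+1 * E i) = Eb i * E i.+1 - v *: (E i.+1 * Eb i),
        F i * F i.+1 - v *: (F i.+1 * F i) = - (Fb i * Fb i.+1 + v *: (Fb i.+1 * Fb i)) &
        F i * Fb i.+1 - v *: (Fb i.+1 * F i) = Fb i * F i.+1 - v *: (F i.+1 * Fb i)]).

Definition serre (a x : A) : A :=
  a ^+ 2 * x - (v + v^-1) *: (a * x * a) + x * a ^+ 2.

Definition QQ6 : Prop :=
  forall i j, inN1 i -> inN1 j -> (i == j.+1) || (j == i.+1) ->
  [/\ serre (E i) (E j) = 0, serre (E i) (Eb j) = 0,
      serre (F i) (F j) = 0 & serre (F i) (Fb j) = 0].

Definition Uq_relations : Prop := [/\ QQ1, QQ2, QQ3, QQ4 & QQ5 /\ QQ6].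

(* Quantum root vectors.
   Eup i d = E_{i, i+d+1};  Edown i d = E_{i+d+1, i}. *)
Fixpoint Eup (i d : nat) : A :=
  match d with
  | 0 => E i
  | d'.+1 => - (Eup i d' * E (i + d').+1) + v^-1 *: (E (i + d').+1 * Eup i d')
  end.
Fixpoint Edown (i d : nat) : A :=
  match d with
  | 0 => F i
  | d'.+1 => - (F (i + d').+1 * Edown i d') + v *: (Edown i d' * F (i + d').+1)
  end.

(* Eroot a b = E_{a,b} for a <> b (set to 0 on the unused diagonal). *)
Definition Eroot (a b : nat) : A :=
  if (a < b)%N then Eup a (b - a).-1
  else if (b < a)%N then Edown b (a - b).-1 else 0.

End Uq.

From HB Require Import structures.
From mathcomp Require Import all_boot all_order all_algebra.
From mathcomp Require Import ring zify.
Set Implicit Arguments. Unset Strict Implicit. Unset Printing Implicit Defensive.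
Import Order.TTheory GRing.Theory Num.Theory.
Local Open Scope ring_scope.

(* Only the even generators K_c^{+-1}, E_a, F_a enter the root vectors, so only
   the U_v(gl_n) part of the relations is needed.  Each E_{a,b} is a weight
   vector of weight eps_a - eps_b: K_c E_{a,b} = v^(eps_c, eps_a - eps_b) E_{a,b} K_c,
   so the factors K_p K_q^{-1} produced by [E_a, F_a] can be moved across root
   vectors at the cost of explicit powers of v.  The bracket [x, y] = xy - yx is a
   derivation in each argument, and every case is proved by induction along the
   recursive definition of one of the two root vectors; the base cases reduce to
   [E_a, F_a] and to the commutation of generators with distant indices.  The case
   i = k, j = l is proved by induction on j, simultaneously with the case
   i = k < j, l = j + 1, on which the other cases then build. *)

Lemma vq_neq0 : vq != 0.
Proof. by rewrite /vq tofrac_eq0 polyX_eq0. Qed.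

Lemma vq_sqr_sub1_neq0 : vq * vq - 1 != 0.
Proof.
rewrite /vq -tofracM -tofrac1 -tofracB tofrac_eq0.
by apply/eqP => /(congr1 (horner^~ 0)) /eqP; rewrite !hornerE oppr_eq0 oner_eq0.
Qed.

Lemma for_any_field (P : fieldType -> Prop) : (forall R, P R) -> P QV.
Proof. exact. Qed.

(* [field] does not terminate on the concrete field [QV], so identities in [vq]
   are proved for an arbitrary element of an arbitrary field satisfying the same
   non-vanishing conditions. *)
Ltac field_vq :=
  lazymatch goal with |- ?a = ?b => change (@eq (GRing.Field.sort QV) a b) end;
  move: vq_neq0 vq_sqr_sub1_neq0; generalize vq; pattern QV; apply: for_any_field;
  let R := fresh "R" in let w := fresh "w" in
  let w_neq0 := fresh "w_neq0" in let w_sqr_sub1_neq0 := fresh "w_sqr_sub1_neq0" in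
  move=> R w w_neq0 w_sqr_sub1_neq0; field; rewrite ?w_neq0 ?w_sqr_sub1_neq0.

Section LinearCombination.
Variables (R : pzRingType) (V : lmodType R).

Inductive lin_expr :=
  | LinVar of nat
  | LinZero
  | LinAdd of lin_expr & lin_expr
  | LinOpp of lin_expr
  | LinScale of R & lin_expr.

Fixpoint lin_eval (xs : seq V) (t : lin_expr) : V :=
  match t with
  | LinVar k => xs`_k
  | LinZero => 0
  | LinAdd t u => lin_eval xs t + lin_eval xs u
  | LinOpp t => - lin_eval xs t
  | LinScale s t => s *: lin_eval xs t
  end.

Fixpoint lin_coef (k : nat) (t : lin_expr) : R :=
  match t with
  | LinVar j => if j == k then 1 else 0
  | LinZero => 0
  | LinAdd t u => lin_coef k t + lin_coef k u
  | LinOpp t => - lin_coef k t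
  | LinScale s t => s * lin_coef k t
  end.

Lemma lin_evalE xs t : lin_eval xs t = \sum_(k < size xs) lin_coef k t *: xs`_k.
Proof.
elim: t => [j||t IHt u IHu|t IHt|s t IHt] /=.
- have [jxs|xsj] := ltnP j (size xs); last first.
    rewrite nth_default // big1 // => k _.
    by rewrite gtn_eqF ?scale0r // (leq_trans (ltn_ord k)).
  rewrite (bigD1 (Ordinal jxs)) //= eqxx scale1r big1 ?addr0 // => k.
  by rewrite -val_eqE /= eq_sym => /negbTE ->; rewrite scale0r.
- by rewrite big1 // => k _; rewrite scale0r.
- by rewrite IHt IHu -big_split; apply: eq_bigr => k _; rewrite scalerDl.
- by rewrite IHt -sumrN; apply: eq_bigr => k _; rewrite scaleNr.
- by rewrite IHt scaler_sumr; apply: eq_bigr => k _; rewrite scalerA.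
Qed.

Fixpoint lin_coef_eq (t u : lin_expr) (m : nat) : Prop :=
  if m is m'.+1 then lin_coef m' t = lin_coef m' u /\ lin_coef_eq t u m' else True.

Lemma lin_eval_eq xs t u : lin_coef_eq t u (size xs) -> lin_eval xs t = lin_eval xs u.
Proof.
move=> tu; rewrite !lin_evalE; apply: eq_bigr => -[k kxs] _ /=; congr (_ *: _).
elim: (size xs) tu k kxs => // m IH [tu_m tu] k; rewrite ltnS leq_eqVlt.
by case/orP => [/eqP -> // | /IH]; apply.
Qed.

End LinearCombination.

Ltac lin_insert x xs :=
  lazymatch xs with
  | [::] => constr:([:: x])
  | x :: _ => xs
  | ?y :: ?ys => let zs := lin_insert x ys in constr:(y :: zs)
  end.

Ltac lin_atoms xs e :=
  lazymatch e with
  | 0%R => xs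
  | ?x + ?y => let xs := lin_atoms xs x in lin_atoms xs y
  | - ?x => lin_atoms xs x
  | _ *: ?x => lin_atoms xs x
  | _ => lin_insert e xs
  end.

Ltac lin_index x xs :=
  lazymatch xs with
  | x :: _ => constr:(0%N)
  | _ :: ?ys => let k := lin_index x ys in constr:(k.+1)
  end.

Ltac lin_reify xs e :=
  lazymatch e with
  | 0%R => uconstr:(LinZero _)
  | ?x + ?y => let a := lin_reify xs x in let b := lin_reify xs y in uconstr:(LinAdd a b)
  | - ?x => let a := lin_reify xs x in uconstr:(LinOpp a)
  | ?s *: ?x => let a := lin_reify xs x in uconstr:(LinScale s a)
  | _ => let k := lin_index e xs in uconstr:(LinVar _ k)
  end.

Ltac lin_abstract_atoms e :=
  lazymatch e with
  | 0%R => idtac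
  | ?x + ?y => lin_abstract_atoms x; lin_abstract_atoms y
  | - ?x => lin_abstract_atoms x
  | _ *: ?x => lin_abstract_atoms x
  | _ => tryif is_var e then idtac else (let m := fresh "m" in try set m := e)
  end.

(* Atoms are first abstracted with [set], which identifies occurrences that
   differ only in their (convertible) canonical instances; the identity is then
   reduced to the equality of the coefficients of the atoms. *)
Ltac lin_coefs :=
  lazymatch goal with |- ?L = _ => lin_abstract_atoms L end;
  lazymatch goal with |- _ = ?R => lin_abstract_atoms R end;
  lazymatch goal with
  | |- ?L = ?R =>
    let T := type of L in
    let xs := lin_atoms (@nil T) L in let xs := lin_atoms xs R in
    let t := lin_reify xs L in let u := lin_reify xs R in
    change (lin_eval xs t = lin_eval xs u); apply: lin_eval_eq; rewrite /=;
    repeat split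
  end.

Lemma ltn_succ_ind a (P : nat -> Prop) :
  P a.+1 -> (forall b, (a < b)%N -> P b -> P b.+1) -> forall b, (a < b)%N -> P b.
Proof.
move=> Pa PS; elim=> // b IH; rewrite ltnS leq_eqVlt => /orP [/eqP <- // | ab].
exact: PS ab (IH ab).
Qed.

Section Bracket.
Variables (R : pzRingType) (A : algType R).
Implicit Types (x y z : A) (s : R).

Definition bracket x y := x * y - y * x.

Lemma bracket_anti x y : bracket x y = - bracket y x.
Proof. by rewrite /bracket opprB. Qed.

Lemma bracketDl x y z : bracket (x + y) z = bracket x z + bracket y z.
Proof. by rewrite /bracket mulrDl mulrDr opprD addrACA. Qed.

Lemma bracketDr x y z : bracket x (y + z) = bracket x y + bracket x z.
Proof. by rewrite /bracket mulrDl mulrDr opprD addrACA. Qed.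

Lemma bracketNl x y : bracket (- x) y = - bracket x y.
Proof. by rewrite /bracket mulrN mulNr opprB opprK addrC. Qed.

Lemma bracketNr x y : bracket x (- y) = - bracket x y.
Proof. by rewrite /bracket mulrN mulNr opprB opprK addrC. Qed.

Lemma bracketZl s x y : bracket (s *: x) y = s *: bracket x y.
Proof. by rewrite /bracket -scalerAl -scalerAr scalerBr. Qed.

Lemma bracketZr s x y : bracket x (s *: y) = s *: bracket x y.
Proof. by rewrite /bracket -scalerAl -scalerAr scalerBr. Qed.

Lemma bracketMl x y z : bracket (x * y) z = x * bracket y z + bracket x z * y.
Proof. by rewrite /bracket mulrBl mulrBr !mulrA addrA subrK. Qed.

Lemma bracketMr x y z : bracket x (y * z) = bracket x y * z + y * bracket x z.
Proof. by rewrite /bracket mulrBl mulrBr !mulrA addrA subrK. Qed.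

Definition bracketE :=
  (bracketDl, bracketDr, bracketNl, bracketNr, bracketZl, bracketZr, bracketMl, bracketMr).

Lemma comm_bracket0 x y : GRing.comm x y -> bracket x y = 0.
Proof. by rewrite /bracket => ->; rewrite subrr. Qed.

Lemma bracket0_comm x y : bracket x y = 0 -> GRing.comm x y.
Proof. by move/eqP; rewrite subr_eq0 => /eqP. Qed.

Lemma mulr_bracket x y : x * y = y * x + bracket x y.
Proof. by rewrite addrC subrK. Qed.

Lemma mulrZl s x y : s *: x * y = s *: (x * y).
Proof. by rewrite scalerAl. Qed.

Lemma mulrZr s x y : x * (s *: y) = s *: (x * y).
Proof. by rewrite scalerAr. Qed.

Lemma commr_root_rec x y z s : GRing.comm x y -> GRing.comm x z ->
  GRing.comm x (- (y * z) + s *: (z * y)).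
Proof.
move=> xy xz; apply: commrD; first exact/commrN/commrM.
by rewrite /GRing.comm mulrZr mulrZl; congr (_ *: _); apply: commrM.
Qed.

End Bracket.

Ltac expand := rewrite ?(mulrDr, mulrDl, mulrN, mulNr, mulr0, mul0r, mulrZl, mulrZr, mulrA).

Section RootRecursion.
Variables (A : algType QV) (E F : nat -> A).
Local Notation X := (Eroot E F).

Lemma Eroot_up1 a : X a a.+1 = E a.
Proof. by rewrite /Eroot ltnSn subSnn. Qed.

Lemma Eroot_down1 a : X a.+1 a = F a.
Proof. by rewrite /Eroot ltnNge leqnSn ltnSn subSnn. Qed.

Lemma Eroot_up_rec a b : (a < b)%N ->
  X a b.+1 = - (X a b * E b) + vq^-1 *: (E b * X a b).
Proof.
move=> ab; rewrite /Eroot ab ltnS (ltnW ab) subSn ?(ltnW ab) //=.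
case dE: (b - a)%N => [|d]; first by lia.
by rewrite /= (_ : (a + d).+1 = b) //; lia.
Qed.

Lemma Eroot_down_rec a b : (a < b)%N ->
  X b.+1 a = - (F b * X b a) + vq *: (X b a * F b).
Proof.
move=> ab; have [ba bSa] : ~~ (b.+1 < a)%N /\ ~~ (b < a)%N by split; lia.
rewrite /Eroot (negbTE ba) (negbTE bSa) ltnS (ltnW ab) ab subSn ?(ltnW ab) //=.
case dE: (b - a)%N => [|d]; first by lia.
by rewrite /= (_ : (a + d).+1 = b) //; lia.
Qed.

End RootRecursion.

Section EvenRelations.
Variables (A : algType QV) (n : nat) (K Ki E F : nat -> A).
Local Notation inN c := (1 <= c <= n)%N.
Local Notation inN1 c := (1 <= c <= n.-1)%N.

Record even_relations : Prop := EvenRelations {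
  mulKKV : forall c, inN c -> K c * Ki c = 1;
  mulKVK : forall c, inN c -> Ki c * K c = 1;
  commKK : forall a b, inN a -> inN b -> GRing.comm (K a) (K b);
  mulKE : forall c d, inN c -> inN1 d -> K c * E d = vpow c d *: (E d * K c);
  mulKF : forall c d, inN c -> inN1 d -> K c * F d = vpowN c d *: (F d * K c);
  bracketEF : forall a, inN1 a ->
    bracket (E a) (F a) = (vq - vq^-1)^-1 *: (K a * Ki a.+1 - Ki a * K a.+1);
  commEF : forall a b, inN1 a -> inN1 b -> a != b -> GRing.comm (E a) (F b);
  commFF : forall a b, inN1 a -> inN1 b -> (a.+1 < b)%N || (b.+1 < a)%N ->
    GRing.comm (F a) (F b)
}.

End EvenRelations.

Lemma Uq_relations_even n (A : algType QV) (K Ki Kb E Eb F Fb : nat -> A) :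
  Uq_relations n K Ki Kb E Eb F Fb -> even_relations n K Ki E F.
Proof.
case=> QQ1 QQ2 _ QQ4 [[_ [_ [QQ5far _]]] _]; split.
- by move=> c hc; case: (QQ1 c c hc hc).
- by move=> c hc; case: (QQ1 c c hc hc).
- by move=> a b ha hb; case: (QQ1 a b ha hb).
- by move=> c d hc hd; case: (QQ2 c d hc hd).
- by move=> c d hc hd; case: (QQ2 c d hc hd).
- by move=> a ha; case: (QQ4 a a ha ha); rewrite eqxx.
- move=> a b ha hb /negbTE ab; apply: bracket0_comm.
  by case: (QQ4 a b ha hb); rewrite ab.
- by move=> a b ha hb ab; case: (QQ5far a b ha hb ab).
Qed.

Section RootVectors.
Variables (A : algType QV) (n : nat) (K Ki E F : nat -> A).
Hypothesis rel : even_relations n K Ki E F.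
Local Notation v := vq.
Local Notation X := (Eroot E F).
Local Notation inN c := (1 <= c <= n)%N.
Local Notation inN1 c := (1 <= c <= n.-1)%N.

Lemma commKKV a b : inN a -> inN b -> GRing.comm (K a) (Ki b).
Proof.
move=> ha hb; have e : Ki b * K a = Ki b * (K a * K b) * Ki b.
  by rewrite -!mulrA (mulKKV rel hb) mulr1.
by rewrite /GRing.comm e (commKK rel ha hb) !mulrA (mulKVK rel hb) mul1r.
Qed.

Lemma commKVKV a b : inN a -> inN b -> GRing.comm (Ki a) (Ki b).
Proof.
move=> ha hb; have e : Ki b * (K b * Ki a) * Ki b = Ki a * Ki b.
  by rewrite mulrA (mulKVK rel hb) mul1r.
by rewrite /GRing.comm -e (commKKV hb ha) -!mulrA (mulKKV rel hb) mulr1.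
Qed.

Lemma mulKKV_swap p q r s : inN p -> inN q -> inN r -> inN s ->
  K p * Ki q * K r * Ki s = K r * Ki s * K p * Ki q.
Proof.
move=> hp hq hr hs; have comm_pq_rs : GRing.comm (K p * Ki q) (K r * Ki s).
  by apply: commrM; apply/commr_sym/commrM;
    [exact: (commKK rel) | exact: commKKV | exact/commr_sym/commKKV | exact: commKVKV].
by rewrite -(mulrA (K p * Ki q) (K r)) comm_pq_rs !mulrA.
Qed.

Lemma mulKKV_cancel p q r : inN q -> K p * Ki q * K q * Ki r = K p * Ki r.
Proof. by move=> hq; rewrite -(mulrA _ (Ki q)) (mulKVK rel hq) mulr1. Qed.

Lemma bracket_EF a : inN1 a ->
  bracket (E a) (F a) = (v - v^-1)^-1 *: (K a * Ki a.+1 - K a.+1 * Ki a).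
Proof. by move=> ha; rewrite (bracketEF rel ha) (commKKV (a := a.+1)) //; lia. Qed.

Definition has_weight (x : A) (w : nat -> int) :=
  forall c, inN c -> K c * x = v ^ w c *: (x * K c).

Definition root_weight (a b c : nat) : int := (c == a)%:Z - (c == b)%:Z.

Lemma has_weight_KV x w c : has_weight x w -> inN c ->
  Ki c * x = v ^ (- w c) *: (x * Ki c).
Proof.
move=> xw hc; have vw_neq0 : v ^ w c != 0 by rewrite expfz_neq0 ?vq_neq0.
have e : x * K c = (v ^ w c)^-1 *: (K c * x) by rewrite xw // scalerA mulVf ?scale1r.
rewrite -invr_expz -[Ki c * x]mulr1 -(mulKKV rel hc) mulrA -(mulrA (Ki c)) e.
by rewrite mulrZr mulrZl mulrA (mulKVK rel hc) mul1r.
Qed.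

Lemma has_weightM x y wx wy : has_weight x wx -> has_weight y wy ->
  has_weight (x * y) (fun c => wx c + wy c).
Proof.
move=> xw yw c hc; rewrite mulrA xw // mulrZl -mulrA yw // mulrZr mulrA scalerA.
by rewrite expfzDr ?vq_neq0.
Qed.

Lemma has_weightD x y w : has_weight x w -> has_weight y w -> has_weight (x + y) w.
Proof. by move=> xw yw c hc; rewrite mulrDr mulrDl xw // yw // scalerDr. Qed.

Lemma has_weightN x w : has_weight x w -> has_weight (- x) w.
Proof. by move=> xw c hc; rewrite mulrN mulNr xw // scalerN. Qed.

Lemma has_weightZ s x w : has_weight x w -> has_weight (s *: x) w.
Proof. by move=> xw c hc; rewrite mulrZr mulrZl xw // !scalerA mulrC. Qed.

Lemma eq_has_weight x w1 w2 : w1 =1 w2 -> has_weight x w1 -> has_weight x w2.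
Proof. by move=> w12 xw c hc; rewrite -w12 xw. Qed.

Lemma has_weight_E d : inN1 d -> has_weight (E d) (root_weight d d.+1).
Proof.
move=> hd c hc; rewrite (mulKE rel hc hd) /vpow /root_weight.
case: eqP => [->|_]; first by rewrite (ltn_eqF (ltnSn d)) subr0 expr1z.
by case: eqP => _; rewrite ?sub0r ?subr0 ?exprN1 ?expr0z.
Qed.

Lemma has_weight_F d : inN1 d -> has_weight (F d) (root_weight d.+1 d).
Proof.
move=> hd c hc; rewrite (mulKF rel hc hd) /vpowN /root_weight.
case: eqP => [->|_]; first by rewrite (ltn_eqF (ltnSn d)) sub0r exprN1.
by case: eqP => _; rewrite ?subr0 ?expr1z ?expr0z.
Qed.

Ltac weight_arith := rewrite /root_weight; repeat case: eqP => ?; lia.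

Lemma has_weight_Eroot a b : inN a -> inN b -> a != b ->
  has_weight (X a b) (root_weight a b).
Proof.
move=> ha hb; case: ltngtP => // [ab|ba] _.
- move: b ab hb; apply: ltn_succ_ind => [|b ab IH] hb.
    by rewrite Eroot_up1; apply: has_weight_E; lia.
  have Xw := IH ltac:(lia).
  have Ew : has_weight (E b) (root_weight b b.+1) by apply: has_weight_E; lia.
  rewrite Eroot_up_rec //; apply: has_weightD; [apply/has_weightN | apply/has_weightZ].
    by apply: eq_has_weight (has_weightM Xw Ew) => c; weight_arith.
  by apply: eq_has_weight (has_weightM Ew Xw) => c; weight_arith.
- move: a ba ha; apply: ltn_succ_ind => [|a ba IH] ha.
    by rewrite Eroot_down1; apply: has_weight_F; lia.
  have Xw := IH ltac:(lia).
  have Fw : has_weight (F a) (root_weight a.+1 a) by apply: has_weight_F; lia.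
  rewrite Eroot_down_rec //; apply: has_weightD; [apply/has_weightN | apply/has_weightZ].
    by apply: eq_has_weight (has_weightM Fw Xw) => c; weight_arith.
  by apply: eq_has_weight (has_weightM Xw Fw) => c; weight_arith.
Qed.

Lemma mulKKV_weight p q x w z : has_weight x w -> inN p -> inN q -> w p - w q = z ->
  K p * Ki q * x = v ^ z *: (x * K p * Ki q).
Proof.
move=> xw hp hq <-; rewrite -mulrA (has_weight_KV xw hq) mulrZr mulrA xw // mulrZl.
by rewrite scalerA -expfzDr ?vq_neq0 // addrC.
Qed.

Lemma mulKKV_weightl p q y x w z : has_weight x w -> inN p -> inN q -> w p - w q = z ->
  y * K p * Ki q * x = v ^ z *: (y * x * K p * Ki q).
Proof.
move=> xw hp hq hz.
by rewrite -!mulrA [K p * _]mulrA (mulKKV_weight (z := z) xw) // mulrZr !mulrA.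
Qed.

Arguments mulKKV_weight {p q x w} z.
Arguments mulKKV_weightl {p q} y {x w} z.

Lemma comm_F_Eroot_up a b c : (1 <= a)%N -> (a < b)%N -> (b <= n)%N -> inN1 c ->
  (c < a)%N || (b <= c)%N -> GRing.comm (F c) (X a b).
Proof.
move=> ha ab bn hc; move: b ab bn; apply: ltn_succ_ind => [|b ab IH] bn cab.
  by rewrite Eroot_up1; apply/commr_sym/(commEF rel); lia.
rewrite Eroot_up_rec //; apply: commr_root_rec; first by apply: IH; lia.
by apply/commr_sym/(commEF rel); lia.
Qed.

Lemma comm_E_Eroot_down a b c : (1 <= a)%N -> (a < b)%N -> (b <= n)%N -> inN1 c ->
  (c < a)%N || (b <= c)%N -> GRing.comm (E c) (X b a).
Proof.
move=> ha ab bn hc; move: b ab bn; apply: ltn_succ_ind => [|b ab IH] bn cab.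
  by rewrite Eroot_down1; apply: (commEF rel); lia.
rewrite Eroot_down_rec //; apply: commr_root_rec; last by apply: IH; lia.
by apply: (commEF rel); lia.
Qed.

Lemma comm_F_Eroot_down a b c : (1 <= a)%N -> (a < b)%N -> (b <= n)%N -> inN1 c ->
  (b < c)%N -> GRing.comm (F c) (X b a).
Proof.
move=> ha ab bn hc; move: b ab bn; apply: ltn_succ_ind => [|b ab IH] bn bc.
  by rewrite Eroot_down1; apply: (commFF rel); lia.
rewrite Eroot_down_rec //; apply: commr_root_rec; last by apply: IH; lia.
by apply: (commFF rel); lia.
Qed.

Lemma bracket_F_Eroot_up a b : (1 <= a)%N -> (a < b)%N -> (b < n)%N ->
  bracket (F b) (X a b.+1) = v^-1 *: (X a b * K b * Ki b.+1).
Proof.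
move=> ha ab bn; have FX : GRing.comm (F b) (X a b) by apply: comm_F_Eroot_up; lia.
have Xw : has_weight (X a b) (root_weight a b) by apply: has_weight_Eroot; lia.
rewrite Eroot_up_rec // !bracketE (comm_bracket0 FX) bracket_anti bracket_EF; last by lia.
expand; rewrite (mulKKV_weight (-1) Xw) ?(mulKKV_weight 1 Xw); try (weight_arith || lia).
rewrite exprN1 expr1z; expand.
by lin_coefs; field_vq.
Qed.

Lemma bracket_E_Eroot_down a b : (1 <= a)%N -> (a < b)%N -> (b < n)%N ->
  bracket (E b) (X b.+1 a) = - (X b a * K b.+1 * Ki b).
Proof.
move=> ha ab bn; have EX : GRing.comm (E b) (X b a) by apply: comm_E_Eroot_down; lia.
have Xw : has_weight (X b a) (root_weight b a) by apply: has_weight_Eroot; lia.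
rewrite Eroot_down_rec // !bracketE (comm_bracket0 EX) bracket_EF; last by lia.
expand; rewrite (mulKKV_weight 1 Xw) ?(mulKKV_weight (-1) Xw); try (weight_arith || lia).
rewrite exprN1 expr1z; expand.
by lin_coefs; field_vq.
Qed.

Lemma comm_E_Eroot_down_inner a b c : (1 <= a)%N -> (a < c)%N -> (c.+1 < b)%N ->
  (b <= n)%N -> GRing.comm (E c) (X b a).
Proof.
move=> ha ac; move: b; apply: ltn_succ_ind => [|b cb IH] bn.
  apply: bracket0_comm; rewrite Eroot_down_rec; last by lia.
  have EF : GRing.comm (E c) (F c.+1) by apply: (commEF rel); lia.
  have FX : GRing.comm (F c.+1) (X c a) by apply: comm_F_Eroot_down; lia.
  have Fw : has_weight (F c.+1) (root_weight c.+2 c.+1) by apply: has_weight_F; lia.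
  rewrite !bracketE (bracket_E_Eroot_down ha ac) ?(comm_bracket0 EF); last by lia.
  expand; rewrite (mulKKV_weightl (X c a) (-1) Fw); try (weight_arith || lia).
  rewrite -FX exprN1; expand.
  by lin_coefs; field_vq.
rewrite Eroot_down_rec; last by lia.
by apply: commr_root_rec; [apply: (commEF rel) | apply: IH]; lia.
Qed.

Lemma comm_Eroot_down_up i j k l : (1 <= i)%N -> (i < j)%N -> (j <= k)%N ->
  (k < l)%N -> (l <= n)%N -> GRing.comm (X j i) (X k l).
Proof.
move=> hi ij jk kl ln; move: j ij jk; apply: ltn_succ_ind => [|j ij IH] jk.
  by rewrite Eroot_down1; apply: comm_F_Eroot_up; lia.
rewrite Eroot_down_rec //; apply/commr_sym/commr_root_rec; apply/commr_sym.
  by apply: comm_F_Eroot_up; lia.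
by apply: IH; lia.
Qed.

Lemma comm_Eroot_down_up_nested i j k l : (1 <= i)%N -> (i < k)%N -> (k < l)%N ->
  (l < j)%N -> (j <= n)%N -> GRing.comm (X j i) (X k l).
Proof.
move=> hi ik kl lj jn; move: l kl lj; apply: ltn_succ_ind => [|l kl IH] lj.
  by rewrite Eroot_up1; apply/commr_sym/comm_E_Eroot_down_inner; lia.
rewrite Eroot_up_rec //; apply: commr_root_rec; first by apply: IH; lia.
by apply/commr_sym/comm_E_Eroot_down_inner; lia.
Qed.

Lemma bracket_Eroot_left_succ i j : (1 <= i)%N -> (i < j)%N -> (j < n)%N ->
  bracket (X j i) (X i j) = (v - v^-1)^-1 *: (K j * Ki i - K i * Ki j) ->
  bracket (X j i) (X i j.+1) = - (E j * K j * Ki i).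
Proof.
move=> hi ij jn pair; have XE : GRing.comm (X j i) (E j).
  by apply/commr_sym/comm_E_Eroot_down; lia.
have Ew : has_weight (E j) (root_weight j j.+1) by apply: has_weight_E; lia.
rewrite Eroot_up_rec // !bracketE pair (comm_bracket0 XE); expand.
rewrite (mulKKV_weight 1 Ew) ?(mulKKV_weight (-1) Ew); try (weight_arith || lia).
rewrite exprN1 expr1z; expand.
by lin_coefs; field_vq.
Qed.

Lemma bracket_Eroot_pair i j : (1 <= i)%N -> (i < j)%N -> (j <= n)%N ->
  bracket (X j i) (X i j) = (v - v^-1)^-1 *: (K j * Ki i - K i * Ki j).
Proof.
move=> hi; move: j; apply: ltn_succ_ind => [|j ij IH] jn.
  rewrite Eroot_down1 Eroot_up1 bracket_anti bracket_EF; last by lia.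
  by rewrite -scalerN opprB.
have pair := IH (ltnW jn).
have Fw : has_weight (F j) (root_weight j.+1 j) by apply: has_weight_F; lia.
have Xw : has_weight (X j i) (root_weight j i) by apply: has_weight_Eroot; lia.
rewrite Eroot_down_rec // !bracketE (bracket_Eroot_left_succ hi ij jn pair).
rewrite (bracket_F_Eroot_up hi ij jn); expand.
rewrite (mulKKV_weightl (E j) (-1) Fw) ?(mulKKV_weightl (X i j) 1 Xw);
  try (weight_arith || lia).
rewrite exprN1 expr1z; expand.
rewrite (mulr_bracket (E j)) (mulr_bracket (X j i)) pair bracket_EF; last by lia.
expand; rewrite (mulKKV_swap (p := j) (q := i)) ?mulKKV_cancel; try lia.
by lin_coefs; field_vq.
Qed.

Lemma bracket_Eroot_left i j l : (1 <= i)%N -> (i < j)%N -> (j < l)%N -> (l <= n)%N ->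
  bracket (X j i) (X i l) = - (X j l * K j * Ki i).
Proof.
move=> hi ij; move: l; apply: ltn_succ_ind => [|l jl IH] ln.
  rewrite Eroot_up1 (bracket_Eroot_left_succ hi ij ln) //.
  by rewrite bracket_Eroot_pair //; lia.
have XE : GRing.comm (X j i) (E l) by apply/commr_sym/comm_E_Eroot_down; lia.
have Ew : has_weight (E l) (root_weight l l.+1) by apply: has_weight_E; lia.
rewrite Eroot_up_rec; last by lia.
rewrite !bracketE (comm_bracket0 XE) IH; last by lia.
expand; rewrite (mulKKV_weightl (X j l) 0 Ew); try (weight_arith || lia).
rewrite expr0z scale1r Eroot_up_rec //; expand.
by lin_coefs; field_vq.
Qed.

Lemma bracket_Eroot_right i k j : (1 <= i)%N -> (i < k)%N -> (k < j)%N -> (j <= n)%N ->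
  bracket (X j i) (X k j) = X k i * K j * Ki k.
Proof.
move=> hi ik; move: j; apply: ltn_succ_ind => [|j kj IH] jn.
  by rewrite Eroot_up1 bracket_anti (bracket_E_Eroot_down hi ik) ?opprK //; lia.
have XX : GRing.comm (X j.+1 i) (X k j) by apply: comm_Eroot_down_up_nested; lia.
have Xw : has_weight (X k j) (root_weight k j) by apply: has_weight_Eroot; lia.
rewrite Eroot_up_rec // !bracketE (comm_bracket0 XX) (bracket_anti _ (E j)).
rewrite (bracket_E_Eroot_down hi (ltn_trans ik kj) jn); expand.
rewrite (mulKKV_weightl (X j i) 1 Xw); try (weight_arith || lia).
rewrite expr1z (mulr_bracket (X j i)) IH; last by lia.
expand; rewrite -3!(mulrA (X k i)) (mulKKV_swap (p := j)) ?mulKKV_cancel ?mulrA; try lia.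
by lin_coefs; field_vq.
Qed.

Lemma bracket_Eroot_cross i k j l : (1 <= i)%N -> (i < k)%N -> (k < j)%N -> (j < l)%N ->
  (l <= n)%N -> bracket (X j i) (X k l) = - ((v - v^-1) *: (X k i * X j l * K j * Ki k)).
Proof.
move=> hi ik kj; move: l; apply: ltn_succ_ind => [|l jl IH] ln.
  have XE : GRing.comm (X j i) (E j) by apply/commr_sym/comm_E_Eroot_down; lia.
  have EX : GRing.comm (E j) (X k i) by apply: comm_E_Eroot_down; lia.
  have Ew : has_weight (E j) (root_weight j j.+1) by apply: has_weight_E; lia.
  rewrite Eroot_up_rec // Eroot_up1 !bracketE (comm_bracket0 XE) bracket_Eroot_right //;
    last by lia.
  expand; rewrite (mulKKV_weightl (X k i) 1 Ew); try (weight_arith || lia).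
  rewrite expr1z EX; expand.
  by lin_coefs; field_vq.
have XE : GRing.comm (X j i) (E l) by apply/commr_sym/comm_E_Eroot_down; lia.
have EX : GRing.comm (E l) (X k i) by apply: comm_E_Eroot_down; lia.
have Ew : has_weight (E l) (root_weight l l.+1) by apply: has_weight_E; lia.
rewrite Eroot_up_rec; last by lia.
rewrite !bracketE (comm_bracket0 XE) IH; last by lia.
expand; rewrite (mulKKV_weightl (X k i * X j l) 0 Ew); try (weight_arith || lia).
rewrite expr0z scale1r EX (Eroot_up_rec _ _ jl); expand.
by lin_coefs; field_vq.
Qed.

End RootVectors.

Theorem lemma2p9 (n : nat) (A : algType QV) (K Ki Kb E Eb F Fb : nat -> A) :
  Uq_relations n K Ki Kb E Eb F Fb ->
  forall i j k l : nat,
    (1 <= i)%N -> (i < j)%N -> (j <= n)%N ->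
    (1 <= k)%N -> (k < l)%N -> (l <= n)%N -> (i <= k)%N ->
  let Er := Eroot E F in
  [/\ ((i < j <= k)%N || [&& i < k, k < l & l < j]%N) ->
        Er j i * Er k l = Er k l * Er j i,
      [&& i == k, k < j & j < l]%N ->
        Er j i * Er k l = Er k l * Er j i - Er j l * K j * Ki i,
      [&& i < k, k < j & j == l]%N ->
        Er j i * Er k l = Er k l * Er j i + Er k i * K j * Ki k,
      [&& i < k, k < j & j < l]%N ->
        Er j i * Er k l = Er k l * Er j i - (vq - vq^-1) *: (Er k i * Er j l * K j * Ki k) &
      ((i == k) && (j == l))%N ->
        Er j i * Er k l = Er k l * Er j i + (vq - vq^-1)^-1 *: (K j * Ki i - K i * Ki j)].
Proof.
move=> /Uq_relations_even rel i j k l hi ij jn hk kl ln ik Er; split.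
- case/orP => [/andP [_ jk] | /and3P [ik' kl' lj]].
    exact (comm_Eroot_down_up rel hi ij jk kl ln).
  exact (comm_Eroot_down_up_nested rel hi ik' kl' lj jn).
- by case/and3P => /eqP <- _ jl; rewrite mulr_bracket (bracket_Eroot_left rel).
- by case/and3P => ik' kj /eqP <-; rewrite mulr_bracket (bracket_Eroot_right rel).
- by case/and3P => ik' kj jl; rewrite mulr_bracket (bracket_Eroot_cross rel).
- by case/andP => /eqP <- /eqP <-; rewrite mulr_bracket (bracket_Eroot_pair rel).
Qed.
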